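(* In the setting below, for every $i\in\{1,\dots,2n+1\}$ we have $g_0g_ig_0^{-1}=g_1^{m_{i1}}g_2^{m_{i2}}\cdots g_{2n+1}^{m_{i,2n+1}}$. In particular $H_M$ is a normal subgroup of $G_M$.
   Context: Let $n\ge 1$ and let $M=(m_{ij})\in SL(2n+1,\mathbb Z)$. Assume that $M$ has exactly one real eigenvalue $\alpha$, that $\alpha>0$, $\alpha\neq 1$, that $\alpha$ is a simple eigenvalue, and that the remaining eigenvalues are $\beta_1,\dots,\beta_k,\bar\beta_1,\dots,\bar\beta_k$ with $\mathrm{Im}\,\beta_j>0$. Let $W\subset\mathbb C^{2n+1}$ be the direct sum of the generalized eigenspaces of $M$ for $\beta_1,\dots,\beta_k$ (so $\dim_{\mathbb C}W=n$). Fix a real eigenvector $a=(a^{(1)},\dots,a^{(2n+1)})^\top\in\mathbb R^{2n+1}$ of $M$ for $\alpha$ and a basis $b_1,\dots,b_n$ of $W$, $b_j=(b_j^{(1)},\dots,b_j^{(2n+1)})^\top$, and let $R=(r_{\ell j})\in M_n(\mathbb C)$ be given by $Mb_j=\sum_{\ell=1}^n r_{\ell j}b_\ell$. For $i=1,\dots,2n+1$ put $u_i=(a^{(i)},b_1^{(i)},\dots,b_n^{(i)})^\top\in\mathbb R\times\mathbb C^n$. Let $\mathbb H=\{w\in\mathbb C:\mathrm{Im}\,w>0\}$, and define holomorphic automorphisms of $\mathbb H\times\mathbb C^n$ by $g_0(w,z)=(\alpha w,R^\top z)$ and $g_i(w,z)=(w,z)+u_i$ for $1\le i\le 2n+1$.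 Let $G_M$ be the group generated by $g_0,\dots,g_{2n+1}$ and $H_M$ the subgroup generated by $g_1,\dots,g_{2n+1}$. *)

From mathcomp Require Import all_boot all_order all_algebra.
From mathcomp Require Import reals.
From mathcomp.real_closed Require Import complex.
Set Implicit Arguments. Unset Strict Implicit. Unset Printing Implicit Defensive.
Import Order.TTheory GRing.Theory Num.Theory.
Local Open Scope ring_scope.
Local Open Scope complex_scope.

Section Defs.
Variable R : realType.
Local Notation C := R[i].

Definition Hpt (n : nat) := {p : C * 'cV[C]_n | 0 < complex.Im p.1}.

Lemma Im_scale_pos (al : R) (w : C) :
  0 < al -> 0 < complex.Im w -> 0 < complex.Im (al%:C * w).
Proof.
move=> hal hw; case: w hw => x y /= hy.
by rewrite mul0r addr0 mulr_gt0.
Qed.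

Lemma Im_transl_pos (x : R) (w : C) :
  0 < complex.Im w -> 0 < complex.Im (w + x%:C).
Proof. by case: w => u v /=; rewrite addr0. Qed.

Definition g0map n (al : R) (hal : 0 < al) (Rm : 'M[C]_n) (p : Hpt n) : Hpt n :=
  exist _ (al%:C * (val p).1, Rm^T *m (val p).2)
        (@Im_scale_pos al (val p).1 hal (valP p)).

Definition transl n (x : R) (v : 'cV[C]_n) (p : Hpt n) : Hpt n :=
  exist _ ((val p).1 + x%:C, (val p).2 + v) (@Im_transl_pos x (val p).1 (valP p)).

End Defs.

(* integer power f^m of a bijection f with inverse finv *)
Definition zit (T : Type) (f finv : T -> T) (m : int) : T -> T :=
  match m with
  | Posz k => iter k f
  | Negz k => iter k.+1 finv
  end.

(* subgroup of the group of bijections of T generated by the set S of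
   bijections: the smallest set of maps containing S and id, closed under
   composition and under taking (two-sided) inverses *)
Definition gen_group (T : Type) (S : (T -> T) -> Prop) (f : T -> T) : Prop :=
  forall G : (T -> T) -> Prop,
    G id -> (forall g, S g -> G g) ->
    (forall g h, G g -> G h -> G (g \o h)) ->
    (forall g ginv, G g -> cancel g ginv -> cancel ginv g -> G ginv) ->
    G f.

Definition normal_sub (T : Type) (H G : (T -> T) -> Prop) : Prop :=
  (forall h, H h -> G h) /\
  (forall g ginv h, G g -> cancel g ginv -> cancel ginv g -> H h ->
     H (g \o h \o ginv)).

Definition gen_eig (K : pzRingType) m (A : 'M[K]_m) (b : K) (v : 'cV[K]_m) : Prop :=
  exists k : nat, (A - b%:M) ^+ k *m v = 0.

Definition Wspace (R : realType) m (A : 'M[R[i]]_m) (v : 'cV[R[i]]_m) : Prop :=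
  exists (s : seq R[i]) (vs : R[i] -> 'cV[R[i]]_m),
    (forall b, b \in s -> 0 < complex.Im b) /\
    (forall b, b \in s -> gen_eig A b (vs b)) /\
    v = \sum_(b <- s) vs b.

From mathcomp Require Import all_boot all_order all_algebra.
From mathcomp Require Import reals.
From mathcomp.real_closed Require Import complex.
From mathcomp Require Import boolp.
Import Order.TTheory GRing.Theory Num.Theory.
Local Open Scope ring_scope.
Local Open Scope complex_scope.

Set Implicit Arguments.
Unset Strict Implicit.
Unset Printing Implicit Defensive.

(* The dilation g_0 conjugates the translation by (x, v) to the translation
   by (alpha x, R^T v).  Because M a = alpha a and M b_j = sum_l r_lj b_l, this
   linear map sends u_i to sum_k m_ik u_k, hence the translation by a lattice
   point sum_k c_k u_k to the translation by sum_k (c M)_k u_k; for c = e_i this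
   is the formula for g_0 g_i g_0^-1.  As det M = 1, M^-1 is integral, so
   conjugation by g_0^-1 maps lattice translations to lattice translations too.
   Thus every generator of G_M normalizes H_M (the g_i because they lie in it).
   g_0 is invertible because R is, which follows from the invertibility of M
   and the freeness of the b_j. *)

Lemma cancel_inv_eq (T : Type) (f k k' : T -> T) :
  cancel f k -> cancel k' f -> k = k'.
Proof. by move=> fK k'K; apply: funext => x; rewrite -{1}(k'K x) fK. Qed.

Section GeneratedGroup.
Variables (T : Type) (S : (T -> T) -> Prop).

Lemma gen_group_gen g : S g -> gen_group S g.
Proof. by move=> Sg G _ GS _ _; apply: GS. Qed.

Lemma gen_group_id : gen_group S id.
Proof. by []. Qed.

Lemma gen_group_comp g h : gen_group S g -> gen_group S h -> gen_group S (g \o h).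
Proof. by move=> Sg Sh G G1 GS GM GV; exact: GM (Sg G G1 GS GM GV) (Sh G G1 GS GM GV). Qed.

Lemma gen_group_inv g ginv :
  gen_group S g -> cancel g ginv -> cancel ginv g -> gen_group S ginv.
Proof. by move=> Sg gK ginvK G G1 GS GM GV; exact: GV (Sg G G1 GS GM GV) gK ginvK. Qed.

Lemma gen_group_zit g ginv m :
  gen_group S g -> gen_group S ginv -> gen_group S (zit g ginv m).
Proof.
have iterS f k : gen_group S f -> gen_group S (iter k f).
  by move=> Sf; elim: k => [|k IH]; [exact: gen_group_id | exact: gen_group_comp Sf IH].
by case: m => k Sg Sginv /=; apply: iterS.
Qed.

Lemma gen_group_mono (S' : (T -> T) -> Prop) f :
  (forall g, S g -> S' g) -> gen_group S f -> gen_group S' f.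
Proof. by move=> SS' Sf G G1 GS'; apply: Sf => // g /SS'; apply: GS'. Qed.

End GeneratedGroup.

Section Normalizer.
Variables (T : Type) (H : (T -> T) -> Prop).

Definition conj_stable (f finv : T -> T) := forall h, H h -> H (f \o h \o finv).

Definition normalizes (f : T -> T) := exists finv,
  [/\ cancel f finv, cancel finv f, conj_stable f finv & conj_stable finv f].

Lemma normalizes_gen_group S f :
  (forall g, S g -> normalizes g) -> gen_group S f -> normalizes f.
Proof.
move=> SN; apply=> //.
- by exists id; split=> // h Hh; rewrite (_ : id \o h \o id = h).
- move=> g h [gi [gK giK gS giS]] [hi [hK hiK hS hiS]].
  exists (hi \o gi); split=> [x | x | k Hk | k Hk] /=.
  + by rewrite gK hK.
  + by rewrite hiK giK.
  + exact: gS _ (hS _ Hk).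
  + exact: hiS _ (giS _ Hk).
- move=> g gi [gi' [gK gi'K gS gi'S]] gK' giK.
  have gi'E := cancel_inv_eq gK giK; subst gi'.
  by exists g.
Qed.

Lemma normal_sub_gen_group S :
  (forall h, H h -> gen_group S h) -> (forall g, S g -> normalizes g) ->
  normal_sub H (gen_group S).
Proof.
move=> HS SN; split=> // g gi h /(normalizes_gen_group SN) [gi' [gK _ gS _]] _ giK.
by rewrite -(cancel_inv_eq gK giK); apply: gS.
Qed.

End Normalizer.

Section NormalizeGenGroup.
Variables (T : Type) (S : (T -> T) -> Prop).

Lemma conj_stable_gen_group f finv : cancel f finv -> cancel finv f ->
  (forall s, S s -> gen_group S (f \o s \o finv)) ->
  conj_stable (gen_group S) f finv.
Proof.
move=> fK finvK Sconj h Sh; apply: (Sh (fun h => gen_group S (f \o h \o finv))) => //.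
- rewrite (_ : f \o id \o finv = id); first exact: gen_group_id.
  exact: funext.
- move=> g1 g2 Sg1 Sg2.
  rewrite (_ : f \o (g1 \o g2) \o finv = (f \o g1 \o finv) \o (f \o g2 \o finv)).
    exact: gen_group_comp.
  by apply: funext => x /=; rewrite fK.
- by move=> g gi Sg gK giK; apply: (gen_group_inv Sg) => x /=; rewrite fK ?gK ?giK.
Qed.

Lemma normalizes_gen_group_mem f finv :
  gen_group S f -> cancel f finv -> cancel finv f -> normalizes (gen_group S) f.
Proof.
move=> Sf fK finvK; have Sfinv := gen_group_inv Sf fK finvK.
by exists finv; split=> // h Sh; do 2!apply: gen_group_comp.
Qed.

End NormalizeGenGroup.

Section Translations.
Variables (R : realType) (n : nat).
Local Notation C := R[i].
Implicit Types (x y : R) (v w : 'cV[C]_n) (p : Hpt R n).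

Lemma transl0 p : transl 0 0 p = p.
Proof. by apply: val_inj; rewrite /= rmorph0 !addr0; case: (val p). Qed.

Lemma translD x v y w p : transl x v (transl y w p) = transl (x + y) (v + w) p.
Proof. by apply: val_inj; rewrite /= rmorphD -!addrA [y%:C + _]addrC [w + _]addrC. Qed.

Lemma translK x v : cancel (transl x v) (transl (- x) (- v)).
Proof. by move=> p; rewrite translD !addNr transl0. Qed.

Lemma translNK x v : cancel (transl (- x) (- v)) (transl x v).
Proof. by move=> p; rewrite translD !subrr transl0. Qed.

Lemma zit_transl x v m :
  zit (transl x v) (transl (- x) (- v)) m = transl (x *~ m) (v *~ m).
Proof.
have iter_transl y w k p : iter k (transl y w) p = transl (y *+ k) (w *+ k) p.
  by elim: k => [|k IH]; rewrite ?mulr0n ?transl0 // iterS IH translD -!mulrS.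
apply: funext => p; case: m => k; rewrite /zit iter_transl.
- by rewrite -pmulrn.
- by rewrite NegzE !mulrNz !mulNrn.
Qed.

Lemma foldr_zit_transl (I : Type) (s : seq I) (xs : I -> R) (vs : I -> 'cV[C]_n)
    (c : I -> int) :
  foldr (fun k f => zit (transl (xs k) (vs k)) (transl (- xs k) (- vs k)) (c k) \o f)
        id s
  = transl (\sum_(k <- s) xs k *~ c k) (\sum_(k <- s) vs k *~ c k).
Proof.
apply: funext => p; elim: s => [|k s IH] /=.
  by rewrite !big_nil transl0.
by rewrite IH zit_transl translD !big_cons.
Qed.

End Translations.

Section Dilation.
Variables (R : realType) (n : nat) (al : R) (hal : 0 < al) (Rm : 'M[R[i]]_n).
Local Notation g0 := (g0map hal Rm).

Lemma g0map_transl x v p :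
  g0 (transl x v p) = transl (al * x) (Rm^T *m v) (g0 p).
Proof. by apply: val_inj; rewrite /= mulrDr mulmxDr rmorphM. Qed.

Lemma conj_g0map_transl finv x v : cancel finv g0 ->
  g0 \o transl x v \o finv = transl (al * x) (Rm^T *m v).
Proof.
by move=> finvK; apply: funext => p; rewrite /= g0map_transl finvK.
Qed.

Hypothesis Rm_unit : Rm \in unitmx.
Variable hali : 0 < al^-1.

Lemma g0mapK : cancel g0 (g0map hali (invmx Rm)).
Proof.
move=> p; apply: val_inj; rewrite /= mulmxA -trmx_mul mulmxV // trmx1 mul1mx.
by rewrite mulrA -rmorphM mulVf ?gt_eqF // mul1r; case: (val p).
Qed.

Lemma g0mapKV : cancel (g0map hali (invmx Rm)) g0.
Proof.
move=> p; apply: val_inj; rewrite /= mulmxA -trmx_mul mulVmx // trmx1 mul1mx.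
by rewrite mulrA -rmorphM mulfV ?gt_eqF // mul1r; case: (val p).
Qed.

End Dilation.

Lemma sum_intmul_mulmx (U : zmodType) N (us : 'I_N -> U) (M : 'M[int]_N)
    (c : 'rV[int]_N) :
  \sum_k (\sum_l us l *~ M k l) *~ c 0 k = \sum_l us l *~ (c *m M) 0 l.
Proof.
under eq_bigr do rewrite mulrz_suml.
rewrite exchange_big; apply: eq_bigr => l _; rewrite mxE mulrz_sumr.
by apply: eq_bigr => k _; rewrite -mulrzA mulrC.
Qed.

Lemma eigenvector_entry (K : pzRingType) N (M : 'M[int]_N) (a : 'cV[K]_N) (al : K) :
  map_mx (fun z : int => z%:~R) M *m a = al *: a ->
  forall k, al * a k 0 = \sum_l a l 0 *~ M k l.
Proof.
move=> /matrixP ha k; have := ha k 0; rewrite !mxE => <-.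
by apply: eq_bigr => l _; rewrite mxE mulrzl.
Qed.

Lemma invariant_family_entry (K : comPzRingType) N n (M : 'M[int]_N)
    (bs : 'I_n -> 'cV[K]_N) (Rm : 'M[K]_n) :
  (forall j, map_mx (fun z : int => z%:~R) M *m bs j = \sum_l Rm l j *: bs l) ->
  forall k, Rm^T *m (\col_j bs j k 0) = \sum_l (\col_j bs j l 0) *~ M k l.
Proof.
move=> hR k; apply/matrixP => j z; rewrite (ord1 z) !mxE summxE.
have /matrixP/(_ k 0) := hR j; rewrite !mxE summxE => hRjk.
transitivity (\sum_l (Rm l j *: bs l) k 0).
  by apply: eq_bigr => l _; rewrite !mxE.
by rewrite -hRjk; apply: eq_bigr => l _; rewrite -scaler_int !mxE.
Qed.

Lemma free_invariant_unitmx (K : fieldType) N n (A : 'M[K]_N)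
    (bs : 'I_n -> 'cV[K]_N) (Rm : 'M[K]_n) :
  A \in unitmx ->
  (forall c : 'I_n -> K, \sum_j c j *: bs j = 0 -> forall j, c j = 0) ->
  (forall j, A *m bs j = \sum_l Rm l j *: bs l) ->
  Rm \in unitmx.
Proof.
move=> A_unit bs_free hR; rewrite -unitmx_tr unitmxE unitfE.
apply/negP => /det0P [w /negP w_neq0 wRm0]; apply: w_neq0; apply/eqP.
have comb0 : \sum_j w 0 j *: bs j = 0.
  apply: (can_inj (mulKmx A_unit)); rewrite mulmx0 mulmx_sumr.
  under eq_bigr do rewrite -scalemxAr hR scaler_sumr.
  rewrite exchange_big /=; apply: big1 => l _.
  have /matrixP/(_ 0 l) := wRm0; rewrite !mxE => wRm0l.
  rewrite -[RHS](scale0r (bs l)) -wRm0l scaler_suml.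
  by apply: eq_bigr => j _; rewrite scalerA mxE.
by apply/matrixP => i j; rewrite (ord1 i) mxE (bs_free _ comb0).
Qed.

Section LatticeTranslations.
Variables (R : realType) (n N : nat) (xs : 'I_N -> R) (vs : 'I_N -> 'cV[R[i]]_n).

Definition lattice_transl (c : 'rV[int]_N) : Hpt R n -> Hpt R n :=
  transl (\sum_k xs k *~ c 0 k) (\sum_k vs k *~ c 0 k).

Lemma lattice_transl_delta k : lattice_transl 'e_k = transl (xs k) (vs k).
Proof.
have sum_delta (U : zmodType) (us : 'I_N -> U) : \sum_l us l *~ 'e_k 0 l = us k.
  rewrite (bigD1 k) //= big1 => [|l /negbTE l_neq_k]; first by rewrite mxE !eqxx addr0.
  by rewrite mxE l_neq_k andbF.
by rewrite /lattice_transl !sum_delta.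
Qed.

Lemma lattice_transl_row (M : 'M[int]_N) i :
  lattice_transl (row i M)
  = foldr (fun k f => zit (transl (xs k) (vs k)) (transl (- xs k) (- vs k)) (M i k) \o f)
          id (enum 'I_N).
Proof.
rewrite foldr_zit_transl !big_enum /lattice_transl.
by congr transl; apply: eq_bigr => k _; rewrite mxE.
Qed.

Lemma lattice_transl_gen_group c :
  gen_group (fun f => exists k, f = transl (xs k) (vs k)) (lattice_transl c).
Proof.
have -> : lattice_transl c
  = foldr (fun k f => zit (transl (xs k) (vs k)) (transl (- xs k) (- vs k)) (c 0 k) \o f)
          id (enum 'I_N) by rewrite foldr_zit_transl !big_enum.
elim: (enum _) => [|k s IH]; first exact: gen_group_id.
apply: (gen_group_comp _ IH).
have gen_k : gen_group (fun f => exists j, f = transl (xs j) (vs j)) (transl (xs k) (vs k)).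
  by apply: gen_group_gen; exists k.
exact: gen_group_zit gen_k (gen_group_inv gen_k (translK _ _) (translNK _ _)).
Qed.

Variables (al : R) (hal : 0 < al) (Rm : 'M[R[i]]_n) (M : 'M[int]_N).
Hypothesis xs_eigen : forall k, al * xs k = \sum_l xs l *~ M k l.
Hypothesis vs_eigen : forall k, Rm^T *m vs k = \sum_l vs l *~ M k l.

Lemma conj_lattice_transl finv c : cancel finv (g0map hal Rm) ->
  g0map hal Rm \o lattice_transl c \o finv = lattice_transl (c *m M).
Proof.
move=> finvK; rewrite conj_g0map_transl // /lattice_transl -!sum_intmul_mulmx.
congr transl.
  by rewrite mulr_sumr; apply: eq_bigr => k _; rewrite mulrzAr xs_eigen.
rewrite mulmx_sumr; apply: eq_bigr => k _.
by rewrite -vs_eigen raddfMz.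
Qed.

Lemma conj_inv_lattice_transl finv c : M \in unitmx ->
  cancel (g0map hal Rm) finv -> cancel finv (g0map hal Rm) ->
  finv \o lattice_transl c \o g0map hal Rm = lattice_transl (c *m invmx M).
Proof.
move=> M_unit g0K finvK; have := conj_lattice_transl (c *m invmx M) finvK.
rewrite mulmxKV // => <-.
by apply: funext => p /=; rewrite !g0K.
Qed.

End LatticeTranslations.

Theorem lemma2p3 (R : realType) (n : nat) (hn : (0 < n)%N)
  (M : 'M[int]_(n.*2.+1))
  (hdet : \det M = 1)
  (al : R) (hal : 0 < al) (hal1 : al != 1)
  (heig : eigenvalue (map_mx (fun z : int => z%:~R : R[i]) M) al%:C)
  (hsimple : mup al%:C (char_poly (map_mx (fun z : int => z%:~R : R[i]) M)) = 1%N)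
  (honlyreal : forall l : R[i],
      eigenvalue (map_mx (fun z : int => z%:~R : R[i]) M) l ->
      complex.Im l = 0 -> l = al%:C)
  (a : 'cV[R]_(n.*2.+1)) (ha0 : a != 0)
  (ha : map_mx (fun z : int => z%:~R : R) M *m a = al *: a)
  (b : 'I_n -> 'cV[R[i]]_(n.*2.+1))
  (hbW : forall j, Wspace (map_mx (fun z : int => z%:~R : R[i]) M) (b j))
  (hbfree : forall c : 'I_n -> R[i], \sum_(j < n) c j *: b j = 0 ->
              forall j, c j = 0)
  (hbspan : forall v, Wspace (map_mx (fun z : int => z%:~R : R[i]) M) v ->
              exists c : 'I_n -> R[i], v = \sum_(j < n) c j *: b j)
  (Rm : 'M[R[i]]_n)
  (hR : forall j, map_mx (fun z : int => z%:~R : R[i]) M *m b j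
                  = \sum_(l < n) Rm l j *: b l) :
  let g0 := g0map hal Rm in
  let g := fun i : 'I_(n.*2.+1) => transl (a i 0) (\col_(j < n) b j i 0) in
  let ginv := fun i : 'I_(n.*2.+1) => transl (- a i 0) (- \col_(j < n) b j i 0) in
  let G_M := gen_group (fun f => f = g0 \/ exists i, f = g i) in
  let H_M := gen_group (fun f => exists i, f = g i) in
  (exists g0inv, cancel g0 g0inv /\ cancel g0inv g0) /\
  (forall g0inv, cancel g0 g0inv -> cancel g0inv g0 ->
     forall i : 'I_(n.*2.+1),
       g0 \o g i \o g0inv
       = foldr (fun k f => zit (g k) (ginv k) (M i k) \o f) id
               (enum 'I_(n.*2.+1))) /\
  normal_sub H_M G_M.
Proof.
move=> g0 g ginv G_M H_M.
pose xs k := a k 0; pose vs k := \col_(j < n) b j k 0.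
have M_unit : M \in unitmx by rewrite unitmxE hdet unitr1.
have Rm_unit : Rm \in unitmx.
  apply: free_invariant_unitmx hbfree hR.
  by rewrite unitmxE det_map_mx hdet rmorph1 unitr1.
have hali : 0 < al^-1 by rewrite invr_gt0.
pose g0inv := g0map hali (invmx Rm).
have g0K : cancel g0 g0inv := g0mapK hal Rm_unit hali.
have g0invK : cancel g0inv g0 := g0mapKV hal Rm_unit hali.
have xs_eigen : forall k, al * xs k = \sum_l xs l *~ M k l := eigenvector_entry ha.
have vs_eigen : forall k, Rm^T *m vs k = \sum_l vs l *~ M k l :=
  invariant_family_entry hR.
have g_lattice i : g i = lattice_transl xs vs 'e_i by rewrite lattice_transl_delta.
have H_lattice c : H_M (lattice_transl xs vs c) by apply: lattice_transl_gen_group.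
split; first by exists g0inv.
split=> [finv _ finvK i | ].
  by rewrite g_lattice (conj_lattice_transl xs_eigen vs_eigen) // -rowE lattice_transl_row.
apply: normal_sub_gen_group => [h | _ [-> | [i ->]]].
- by apply: gen_group_mono => _ [i ->]; right; exists i.
- exists g0inv; split=> //.
  + apply: (conj_stable_gen_group g0K g0invK) => _ [i ->].
    by rewrite g_lattice (conj_lattice_transl xs_eigen vs_eigen) //; apply: H_lattice.
  + apply: (conj_stable_gen_group g0invK g0K) => _ [i ->].
    by rewrite g_lattice (conj_inv_lattice_transl xs_eigen vs_eigen) //; apply: H_lattice.
- apply: normalizes_gen_group_mem (translK _ _) (translNK _ _).
  by apply: gen_group_gen; exists i.
Qed.
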